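(* Let $f_c>0$, $B>0$, $t_{\max}>0$, let $K\ge 3$ be an odd integer, and for $k\in\{1,\dots,K\}$ let $f_k = f_c + \frac{B}{K}\left(k-1-\frac{K-1}{2}\right)$ and $\zeta_k=f_k/f_c$. Let $N\ge1$ and $m\ge1$ be integers, let $\psi_{c,l}\ge 0$, and define $\gamma_{n,m}^{(l)} = ((m-1)N+n-1)\psi_{c,l}$ for $n=1,\dots,N$, and $\vartheta_{\max}=2f_c t_{\max}$. Consider the problem $$\min_{x_{1,m}^{(l)},\dots,x_{N,m}^{(l)}\in\mathbb{R},\ \vartheta_m^{(l)}\in\mathbb{R}}\ \frac{1}{K}\sum_{k=1}^{K}\sum_{n=1}^{N}\left(x_{n,m}^{(l)}-\zeta_k\vartheta_m^{(l)}+\zeta_k\gamma_{n,m}^{(l)}\right)^2 \quad\text{subject to}\quad 0\le \vartheta_m^{(l)}\le\vartheta_{\max}.$$ Its optimal solution is given by $$x_{n,m}^{(l)\star}=\begin{cases}\frac{N-2n+1}{2}\psi_{c,l}, & \text{if } 0\le\psi_{c,l}\le \frac{4f_ct_{\max}}{(2m-1)N-1},\\[2pt] \vartheta_{\max}-\gamma_{n,m}^{(l)}, & \text{otherwise},\end{cases}\qquad n=1,\dots,N,$$ and $\vartheta_m^{(l)\star}=2f_c t_m^{(l)\star}$, where $$t_m^{(l)\star}=\begin{cases}\frac{(2m-1)N-1}{4f_c}\psi_{c,l}, & \text{if } 0\le\psi_{c,l}\le \frac{4f_ct_{\max}}{(2m-1)N-1},\\[2pt] t_{\max}, & \text{otherwise},\end{cases}$$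 with the convention that $\frac{4f_ct_{\max}}{(2m-1)N-1}=+\infty$ when $(2m-1)N-1=0$.
   Context: This is the phase-domain formulation of joint phase-shifter/true-time-delay precoding for one RF chain $l$ and one TTD index $m$: $x_{n,m}^{(l)}$ (in units of $\pi$) are the phase-shifter phases of the $N$ antennas connected to the $m$th TTD, $\vartheta_m^{(l)}=2f_ct_m^{(l)}$ with $t_m^{(l)}\in[0,t_{\max}]$ the TTD time delay, and $-\zeta_k\gamma_{n,m}^{(l)}$ is the phase (in units of $\pi$) of the optimal fully-digital precoder at subcarrier $k$. The paper assumes throughout that $\psi_{c,l}\ge 0$. *)

From mathcomp Require Import all_boot all_order all_algebra.
Set Implicit Arguments. Unset Strict Implicit. Unset Printing Implicit Defensive.
Import Order.TTheory GRing.Theory Num.Theory.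
Local Open Scope ring_scope.

Section PSTTD.
Variable R : realFieldType.

Definition freq (fc B : R) (K k : nat) : R :=
  fc + B / K%:R * (k%:R - 1 - (K%:R - 1) / 2).

Definition zeta (fc B : R) (K k : nat) : R := freq fc B K k / fc.

Definition gam (N m : nat) (psi : R) (n : nat) : R :=
  ((m%:R - 1) * N%:R + n%:R - 1) * psi.

Definition theta_max (fc tmax : R) : R := 2 * fc * tmax.

Definition objective (fc B : R) (K N m : nat) (psi : R) (x : nat -> R) (th : R) : R :=
  K%:R^-1 * \sum_(1 <= k < K.+1) \sum_(1 <= n < N.+1)
     (x n - zeta fc B K k * th + zeta fc B K k * gam N m psi n) ^+ 2.

Definition feasible (fc tmax th : R) : Prop := 0 <= th <= theta_max fc tmax.

Definition is_optimal (fc B tmax : R) (K N m : nat) (psi : R) (x : nat -> R) (th : R) : Prop :=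
  feasible fc tmax th /\
  forall (x' : nat -> R) (th' : R), feasible fc tmax th' ->
    objective fc B K N m psi x th <= objective fc B K N m psi x' th'.

Definition Dm (N m : nat) : R := (2 * m%:R - 1) * N%:R - 1.

Definition small_regime (fc tmax : R) (N m : nat) (psi : R) : bool :=
  (0 <= psi) && ((Dm N m == 0) || (psi <= 4 * fc * tmax / Dm N m)).

Definition x_star (fc tmax : R) (N m : nat) (psi : R) (n : nat) : R :=
  if small_regime fc tmax N m psi then (N%:R - 2 * n%:R + 1) / 2 * psi
  else theta_max fc tmax - gam N m psi n.

Definition t_star (fc tmax : R) (N m : nat) (psi : R) : R :=
  if small_regime fc tmax N m psi then Dm N m / (4 * fc) * psi
  else tmax.

End PSTTD.

From mathcomp Require Import all_boot all_order all_algebra.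
From mathcomp Require Import ring lra.
Import Order.TTheory GRing.Theory Num.Theory.
Local Open Scope ring_scope.

(* The subcarrier ratios zeta_k are centred at 1 and the gamma_n are centred
   at (Dm/2) psi, so expanding the squares around these means kills the cross
   terms: the objective becomes
     sum_n (x_n - (theta - gamma_n))^2 + W (theta - Dm psi / 2)^2 + C
   with W = (N/K) sum_k (zeta_k - 1)^2 > 0 (as B <> 0 and K >= 2) and C
   independent of (x, theta).  The first sum vanishes exactly
   when x_n = theta - gamma_n, and the second term is minimised over
   [0, theta_max] exactly at min (Dm psi / 2) theta_max, which is the claimed
   solution. *)

Lemma sumr_sqr_sub_centered (R : comPzRingType) (I : Type) (r : seq I)
    (u : I -> R) (a b : R) :
  \sum_(i <- r) u i = 0 ->
  \sum_(i <- r) (a - u i * b) ^+ 2 =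
    a ^+ 2 *+ size r + b ^+ 2 * \sum_(i <- r) u i ^+ 2.
Proof.
move=> u_centered.
transitivity (\sum_(i <- r) (a ^+ 2 - 2 * a * b * u i + b ^+ 2 * u i ^+ 2)).
  by apply: eq_bigr => i _; ring.
rewrite big_split sumrB /= -!mulr_sumr u_centered mulr0 subr0.
by rewrite big_const_seq count_predT iter_addr addr0 mulrnAr.
Qed.

Definition mid_offset (R : numFieldType) (M k : nat) : R :=
  k%:R - 1 - (M%:R - 1) / 2.

Lemma sum_mid_offset (R : numFieldType) (M : nat) :
  \sum_(1 <= k < M.+1) mid_offset R M k = 0.
Proof.
have sum_pred (n : nat) :
    \sum_(1 <= k < n.+1) ((k%:R : R) - 1) = n%:R * (n%:R - 1) / 2.
  elim: n => [|n IHn]; first by rewrite big_geq // !mul0r.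
  by rewrite big_nat_recr //= IHn -addn1 natrD; field.
by rewrite big_split /= sum_pred sumr_const_nat subn1 /= -mulr_natl; field.
Qed.

Lemma size_index_iota1 (M : nat) : size (index_iota 1 M.+1) = M.
Proof. by rewrite size_iota subn1. Qed.

Lemma sqr_sub_min_le {R : realDomainType} (c hi t : R) :
  t <= hi -> (Num.min c hi - c) ^+ 2 <= (t - c) ^+ 2.
Proof.
move=> t_le; case: (leP c hi) => [_|hi_lt].
  by rewrite subrr expr0n sqr_ge0.
nra.
Qed.

Lemma sqr_sub_min_uniq {R : realDomainType} (c hi t : R) :
  t <= hi -> (t - c) ^+ 2 <= (Num.min c hi - c) ^+ 2 -> t = Num.min c hi.
Proof.
move=> t_le; case: (leP c hi) => [_|hi_lt] sqr_le; apply/eqP.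
  rewrite subrr expr0n /= in sqr_le.
  by rewrite -subr_eq0 -sqrf_eq0 eq_le sqr_le sqr_ge0.
rewrite eq_le t_le /=; nra.
Qed.

Section SplitQuadraticArgmin.
Context {R : realDomainType} {N : nat} {g : nat -> R} {W c C hi : R}.
Context {F : (nat -> R) -> R -> R}.
Hypotheses (W_gt0 : 0 < W) (c_ge0 : 0 <= c) (hi_ge0 : 0 <= hi).
Hypothesis F_split : forall x th,
  F x th = \sum_(1 <= n < N.+1) (x n - (th - g n)) ^+ 2 + W * (th - c) ^+ 2 + C.

Lemma argmin_split_quadratic (x : nat -> R) (th : R) :
  (0 <= th <= hi /\ forall x' th', 0 <= th' <= hi -> F x th <= F x' th') <->
  ((forall n, (1 <= n <= N)%N -> x n = Num.min c hi - g n) /\ th = Num.min c hi).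
Proof.
set th0 := Num.min c hi.
have th0_feasible : 0 <= th0 <= hi by rewrite le_min c_ge0 hi_ge0 ge_min lexx orbT.
have dev_ge0 y t : 0 <= \sum_(1 <= n < N.+1) (y n - (t - g n)) ^+ 2.
  by apply: sumr_ge0 => n _; exact: sqr_ge0.
have dev_eq0 y t : (forall n, (1 <= n <= N)%N -> y n = t - g n) ->
    \sum_(1 <= n < N.+1) (y n - (t - g n)) ^+ 2 = 0.
  move=> y_eq; rewrite big_nat big1 // => n n_range.
  by rewrite y_eq ?subrr ?expr0n // -ltnS.
split=> [[/andP[_ th_le] th_opt] | [x_eq th_eq]].
  have := th_opt (fun n => th0 - g n) th0 th0_feasible.
  rewrite !F_split (dev_eq0 _ th0) // add0r lerD2r.
  set dev := \sum_(_ <= _ < _) _ => opt_le.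
  have th_eq : th = th0.
    apply: sqr_sub_min_uniq th_le _; rewrite -(ler_pM2l W_gt0).
    by move: (dev_ge0 x th); rewrite -/dev -/th0; lra.
  have dev0 : dev = 0.
    apply/eqP; rewrite eq_le dev_ge0 andbT.
    by move: opt_le; rewrite th_eq; lra.
  split=> // n n_range; apply/eqP; rewrite -subr_eq0 -th_eq -sqrf_eq0.
  move/eqP: dev0; rewrite psumr_eq0 => [/allP/(_ n)|i _]; last exact: sqr_ge0.
  by rewrite mem_index_iota ltnS; apply.
rewrite th_eq; split=> // x' th' /andP[_ th'_le].
rewrite !F_split (dev_eq0 x) // add0r lerD2r.
have := sqr_sub_min_le c hi th' th'_le; rewrite -(ler_pM2l W_gt0) -/th0.
by move: (dev_ge0 x' th'); lra.
Qed.

End SplitQuadraticArgmin.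

Section Model.
Context {R : realFieldType}.
Implicit Types (fc B tmax psi th : R) (x : nat -> R).

Lemma zeta_sub1 fc B (K k : nat) : fc != 0 ->
  zeta fc B K k - 1 = B / K%:R / fc * mid_offset R K k.
Proof.
move=> fc_neq0; rewrite /zeta /freq mulrDl divff // addrAC subrr add0r.
by rewrite mulrAC.
Qed.

Lemma sum_zeta_sub1 fc B (K : nat) : fc != 0 ->
  \sum_(1 <= k < K.+1) (zeta fc B K k - 1) = 0.
Proof.
move=> fc_neq0; under eq_bigr => k _ do rewrite zeta_sub1 //.
by rewrite -mulr_sumr sum_mid_offset mulr0.
Qed.

Lemma gamE (N m : nat) psi (n : nat) :
  gam N m psi n = Dm R N m / 2 * psi + mid_offset R N n * psi.
Proof. by rewrite /gam /Dm /mid_offset; field. Qed.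

Definition zeta_spread fc B (K : nat) : R :=
  \sum_(1 <= k < K.+1) (zeta fc B K k - 1) ^+ 2.

Lemma zeta_spread_gt0 fc B (K : nat) :
  fc != 0 -> B != 0 -> (2 <= K)%N -> 0 < zeta_spread fc B K.
Proof.
move=> fc_neq0 B_neq0 K_ge2.
rewrite /zeta_spread big_ltn ?ltnS ?(leq_trans _ K_ge2) //.
apply: (@lt_le_trans _ _ ((zeta fc B K 1 - 1) ^+ 2)); last first.
  by rewrite lerDl; apply: sumr_ge0 => k _; exact: sqr_ge0.
have K_gt1 : (1 : R) < K%:R by rewrite ltr1n.
rewrite lt_def sqr_ge0 sqrf_eq0 zeta_sub1 // /mid_offset andbT.
rewrite !mulf_neq0 ?invr_eq0 ?pnatr_eq0 -?lt0n ?(leq_trans _ K_ge2) //.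
by rewrite subrr add0r oppr_eq0 mulf_neq0 ?invr_eq0 ?pnatr_eq0 // subr_eq0 gt_eqF.
Qed.

Lemma objectiveE fc B (K N m : nat) psi : fc != 0 -> (0 < K)%N ->
  forall x th, objective fc B K N m psi x th =
    \sum_(1 <= n < N.+1) (x n - (th - gam N m psi n)) ^+ 2
    + zeta_spread fc B K / K%:R * N%:R * (th - Dm R N m / 2 * psi) ^+ 2
    + zeta_spread fc B K / K%:R *
        (psi ^+ 2 * \sum_(1 <= n < N.+1) mid_offset R N n ^+ 2).
Proof.
move=> fc_neq0 K_gt0 x th.
set c := Dm R N m / 2 * psi; set V := zeta_spread fc B K.
have per_phase n : \sum_(1 <= k < K.+1)
      (x n - zeta fc B K k * th + zeta fc B K k * gam N m psi n) ^+ 2 =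
    (x n - (th - gam N m psi n)) ^+ 2 *+ K + (th - gam N m psi n) ^+ 2 * V.
  transitivity (\sum_(1 <= k < K.+1) ((x n - (th - gam N m psi n))
                 - (zeta fc B K k - 1) * (th - gam N m psi n)) ^+ 2).
    by apply: eq_bigr => k _; ring.
  by rewrite sumr_sqr_sub_centered ?sum_zeta_sub1 ?size_index_iota1.
have phase_spread : \sum_(1 <= n < N.+1) (th - gam N m psi n) ^+ 2 =
    (th - c) ^+ 2 *+ N + psi ^+ 2 * \sum_(1 <= n < N.+1) mid_offset R N n ^+ 2.
  transitivity (\sum_(1 <= n < N.+1) ((th - c) - mid_offset R N n * psi) ^+ 2).
    by apply: eq_bigr => n _; rewrite gamE /c; ring.
  by rewrite sumr_sqr_sub_centered ?sum_mid_offset ?size_index_iota1.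
rewrite /objective exchange_big /=.
under eq_bigr => n _ do rewrite per_phase.
rewrite big_split /= sumrMnl -mulr_suml phase_spread.
by field; rewrite pnatr_eq0 -lt0n.
Qed.

Lemma Dm_ge0 (N m : nat) : (1 <= N)%N -> (1 <= m)%N -> 0 <= Dm R N m.
Proof.
rewrite /Dm subr_ge0 -!(ler_nat R) => N_ge1 m_ge1.
have m2_ge1 : (1 : R) <= 2 * m%:R - 1 by lra.
by rewrite -[X in X <= _](mulr1 1) ler_pM.
Qed.

Section Regimes.
Variables (fc tmax psi : R) (N m : nat).
Hypotheses (fc_gt0 : 0 < fc) (tmax_ge0 : 0 <= tmax) (psi_ge0 : 0 <= psi).
Hypothesis Dm_nneg : 0 <= Dm R N m.

Lemma small_regimeE :
  small_regime fc tmax N m psi = (Dm R N m / 2 * psi <= theta_max fc tmax).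
Proof.
rewrite /small_regime /theta_max psi_ge0 /=.
have [->|Dm_neq0] := eqVneq (Dm R N m) 0.
  by rewrite !mul0r /= !mulr_ge0 // ltW.
have Dm_gt0 : 0 < Dm R N m by rewrite lt_def Dm_neq0.
rewrite /= ler_pdivlMr //; apply/idP/idP => ?; nra.
Qed.

Lemma t_starE : 2 * fc * t_star fc tmax N m psi =
  Num.min (Dm R N m / 2 * psi) (theta_max fc tmax).
Proof.
rewrite /t_star minEle -small_regimeE; case: ifP => // _.
by field; rewrite gt_eqF.
Qed.

Lemma x_starE (n : nat) : x_star fc tmax N m psi n =
  Num.min (Dm R N m / 2 * psi) (theta_max fc tmax) - gam N m psi n.
Proof.
rewrite /x_star minEle -small_regimeE gamE /mid_offset.
by case: ifP => // _; field.
Qed.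

End Regimes.
End Model.

Theorem theorem1 (R : realFieldType) (fc B tmax : R) (K N m : nat) (psi : R) :
  0 < fc -> 0 < B -> 0 < tmax -> (3 <= K)%N -> odd K ->
  (1 <= N)%N -> (1 <= m)%N -> 0 <= psi ->
  forall (x : nat -> R) (th : R),
    is_optimal fc B tmax K N m psi x th <->
    ((forall n : nat, (1 <= n <= N)%N -> x n = x_star fc tmax N m psi n) /\
     th = 2 * fc * t_star fc tmax N m psi).
Proof.
move=> fc_gt0 B_gt0 tmax_gt0 K_ge3 _ N_ge1 m_ge1 psi_ge0 x th.
have K_gt0 : (0 < K)%N by apply: leq_trans K_ge3.
have fc_neq0 := lt0r_neq0 fc_gt0; have tmax_ge0 := ltW tmax_gt0.
have Dm_nneg : 0 <= Dm R N m by exact: Dm_ge0.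
have W_gt0 : 0 < zeta_spread fc B K / K%:R * N%:R.
  rewrite !mulr_gt0 ?invr_gt0 ?ltr0n // zeta_spread_gt0 ?lt0r_neq0 //.
  exact: ltnW.
have c_ge0 : 0 <= Dm R N m / 2 * psi by rewrite !mulr_ge0 ?invr_ge0 ?ler0n.
have hi_ge0 : 0 <= theta_max fc tmax by rewrite /theta_max !mulr_ge0 ?ltW.
apply: iff_trans (argmin_split_quadratic W_gt0 c_ge0 hi_ge0
                   (objectiveE fc B K N m psi fc_neq0 K_gt0) x th) _.
rewrite t_starE //.
by split=> -[x_eq ->]; split=> // n n_range; rewrite x_eq ?x_starE.
Qed.
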